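(* Let $G$ be a graph with no induced $P_7$, $C_4$, $C_6$ or $C_7$, let $H=(B_1,\dots,B_5)$ be a nice blowup of $C_5$ in $G$, let $i\in\{1,\dots,5\}$, and let $K$ be a connected subgraph of $G[A_2(i)]$. If two vertices $u,v\in N(K)\cap A'_3(i+1)$ are non-adjacent, then $u$ and $v$ have a common neighbor in $K$.
   Context: Indices modulo $5$. A nice blowup of $C_5$ is a tuple $(B_1,\dots,B_5)$ of pairwise disjoint cliques such that every vertex of $B_j$ has a neighbor in $B_{j-1}$ and in $B_{j+1}$, $B_j$ is anticomplete to $B_{j+2}$, and there are no $a\in B_j$, distinct $b,c\in B_{j+1}$, $d\in B_{j+2}$ with $G[\{a,b,c,d\}]\cong P_4$; $V(H)=\bigcup B_j$. For $v\notin V(H)$, $\operatorname{supp}(v)$ is the set of $j$ such that $v$ has a neighbor in $B_j$. $A_2(i)=\{v\notin V(H):\operatorname{supp}(v)=\{i,i+1\}\}$, $A_3(j)=\{v\notin V(H):\operatorname{supp}(v)=\{j-1,j,j+1\}\}$, and $A'_3(j)=A_3(j)\cup B_j$. $N(K)$ is the set of vertices outside $K$ with a neighbor in $K$. *)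

From mathcomp Require Import all_boot.
Set Implicit Arguments. Unset Strict Implicit. Unset Printing Implicit Defensive.

(* A finite simple graph: vertex type T : finType with a symmetric irreflexive
   adjacency relation adj. Indices of C_5 are 'I_5, with ordS/ord_pred the
   cyclic successor/predecessor (i.e. indices modulo 5). *)

Section Graphs.
Variables (T : finType) (adj : rel T).

Definition induced_path (k : nat) (f : 'I_k -> T) : Prop :=
  injective f /\ forall i j : 'I_k, adj (f i) (f j) = ((i.+1 == j) || (j.+1 == i)).

Definition induced_cycle (k : nat) (f : 'I_k -> T) : Prop :=
  injective f /\ forall i j : 'I_k,
    adj (f i) (f j) = ((i.+1 %% k == j) || (j.+1 %% k == i)).

Definition has_induced_P (k : nat) : Prop := exists f : 'I_k -> T, induced_path f.
Definition has_induced_C (k : nat) : Prop := exists f : 'I_k -> T, induced_cycle f.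

Definition induces_P4 (a b c d : T) : Prop :=
  exists f : 'I_4 -> T, induced_path f /\ [set f x | x in 'I_4] = [set a; b; c; d].

Definition clique (B : {set T}) : Prop :=
  forall x y, x \in B -> y \in B -> x != y -> adj x y.

Definition has_nbr_in (v : T) (B : {set T}) : bool := [exists u in B, adj v u].

Definition anticomplete (A B : {set T}) : Prop :=
  forall x y, x \in A -> y \in B -> ~~ adj x y.

Definition nice_blowup_C5 (B : 'I_5 -> {set T}) : Prop :=
  [/\ (forall j, clique (B j)),
      (forall j k, j != k -> [disjoint B j & B k]),
      (forall j v, v \in B j -> has_nbr_in v (B (ord_pred j)) /\ has_nbr_in v (B (ordS j))),
      (forall j, anticomplete (B j) (B (ordS (ordS j))))
    & (forall j a b c d, a \in B j -> b \in B (ordS j) -> c \in B (ordS j) ->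
         b != c -> d \in B (ordS (ordS j)) -> ~ induces_P4 a b c d)].

Definition VH (B : 'I_5 -> {set T}) : {set T} := \bigcup_(j < 5) B j.

Definition supp (B : 'I_5 -> {set T}) (v : T) : {set 'I_5} :=
  [set j | has_nbr_in v (B j)].

Definition A2 (B : 'I_5 -> {set T}) (i : 'I_5) : {set T} :=
  [set v | (v \notin VH B) && (supp B v == [set i; ordS i])].

Definition A3 (B : 'I_5 -> {set T}) (j : 'I_5) : {set T} :=
  [set v | (v \notin VH B) && (supp B v == [set ord_pred j; j; ordS j])].

Definition A3' (B : 'I_5 -> {set T}) (j : 'I_5) : {set T} := A3 B j :|: B j.

Definition nbhd (K : {set T}) : {set T} :=
  [set v | (v \notin K) && has_nbr_in v K].

Definition connected_in (K : {set T}) : Prop :=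
  K != set0 /\ forall x y, x \in K -> y \in K ->
    connect [rel a b | [&& adj a b, a \in K & b \in K]] x y.

End Graphs.

From mathcomp Require Import all_boot.
Set Implicit Arguments. Unset Strict Implicit. Unset Printing Implicit Defensive.

(* Walking around the blowup from u in A'_3(i+1) gives x in B_(i+2), y in B_(i+3),
   z in B_(i+4) and w in B_i such that z-y-x-u is an induced path, w is a neighbour
   of z missing x and y, neither u nor v sees y or z, and K sees none of x, y, z.
   If u and v had no common neighbour in K, connectivity of K would give either
   an induced path u-a-b-c with a, b, c in K, extending z-y-x-u to an induced P_7,
   or a path u-a-b-v with a, b in K; in the latter case the adjacencies of v to x
   and of w to u, v, a, b produce an induced P_7, C_4, C_6 or C_7. *)

Definition distinct_rows (k : nat) (P : nat -> nat -> bool) : bool :=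
  all (fun i => all (fun j => (i == j) || has (fun l => P i l != P j l) (iota 0 k))
                    (iota 0 k)) (iota 0 k).

Ltac adj_from_hyps adj_sym adj_irr :=
  solve [ rewrite adj_irr // | done | rewrite adj_sym; done
        | apply/negbTE; done | rewrite adj_sym; apply/negbTE; done ].

Section InducedSubgraphs.
Variables (T : finType) (adj : rel T).
Hypotheses (adj_sym : symmetric adj) (adj_irr : irreflexive adj).

Lemma injective_of_adj_pattern k (f : 'I_k -> T) (P : nat -> nat -> bool) :
  distinct_rows k P -> (forall i j : 'I_k, adj (f i) (f j) = P i j) -> injective f.
Proof.
move=> /allP rowsP fP i j fij; apply/val_inj/eqP.
have iotaP (m : 'I_k) : nat_of_ord m \in iota 0 k by rewrite mem_iota ltn_ord.
have /allP/(_ j (iotaP j)) := rowsP i (iotaP i).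
case/orP=> // /hasP[l]; rewrite mem_iota add0n => lk.
have := fP i (Ordinal lk); have := fP j (Ordinal lk).
by rewrite fij /= => -> ->; rewrite eqxx.
Qed.

Lemma induced_of_seq (s : seq T) x0 (P : nat -> nat -> bool) :
  distinct_rows (size s) P ->
  (forall i j, i < size s -> j < size s -> adj (nth x0 s i) (nth x0 s j) = P i j) ->
  exists f : 'I_(size s) -> T, injective f /\ forall i j : 'I_(size s), adj (f i) (f j) = P i j.
Proof.
move=> rowsP sP; have fP (i j : 'I_(size s)) := sP i j (ltn_ord i) (ltn_ord j).
by exists (fun i => nth x0 s i); split => //; apply: injective_of_adj_pattern fP.
Qed.

Lemma induced_P7 (a0 a1 a2 a3 a4 a5 a6 : T) :
  adj a0 a1 -> adj a1 a2 -> adj a2 a3 -> adj a3 a4 -> adj a4 a5 -> adj a5 a6 ->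
  ~~ adj a0 a2 -> ~~ adj a0 a3 -> ~~ adj a0 a4 -> ~~ adj a0 a5 -> ~~ adj a0 a6 ->
  ~~ adj a1 a3 -> ~~ adj a1 a4 -> ~~ adj a1 a5 -> ~~ adj a1 a6 ->
  ~~ adj a2 a4 -> ~~ adj a2 a5 -> ~~ adj a2 a6 ->
  ~~ adj a3 a5 -> ~~ adj a3 a6 -> ~~ adj a4 a6 -> has_induced_P adj 7.
Proof.
move=> *; apply: (@induced_of_seq [:: a0; a1; a2; a3; a4; a5; a6] a0
  (fun i j => (i.+1 == j) || (j.+1 == i))) => //.
by move=> [|[|[|[|[|[|[|i]]]]]]] [|[|[|[|[|[|[|j]]]]]]] //= _ _;
  adj_from_hyps adj_sym adj_irr.
Qed.

Lemma induced_C6 (a0 a1 a2 a3 a4 a5 : T) :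
  adj a0 a1 -> adj a1 a2 -> adj a2 a3 -> adj a3 a4 -> adj a4 a5 -> adj a5 a0 ->
  ~~ adj a0 a2 -> ~~ adj a0 a3 -> ~~ adj a0 a4 ->
  ~~ adj a1 a3 -> ~~ adj a1 a4 -> ~~ adj a1 a5 ->
  ~~ adj a2 a4 -> ~~ adj a2 a5 -> ~~ adj a3 a5 -> has_induced_C adj 6.
Proof.
move=> *; apply: (@induced_of_seq [:: a0; a1; a2; a3; a4; a5] a0
  (fun i j => (i.+1 %% 6 == j) || (j.+1 %% 6 == i))) => //.
by move=> [|[|[|[|[|[|i]]]]]] [|[|[|[|[|[|j]]]]]] //= _ _;
  adj_from_hyps adj_sym adj_irr.
Qed.

Lemma induced_C7 (a0 a1 a2 a3 a4 a5 a6 : T) :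
  adj a0 a1 -> adj a1 a2 -> adj a2 a3 -> adj a3 a4 -> adj a4 a5 -> adj a5 a6 ->
  adj a6 a0 ->
  ~~ adj a0 a2 -> ~~ adj a0 a3 -> ~~ adj a0 a4 -> ~~ adj a0 a5 ->
  ~~ adj a1 a3 -> ~~ adj a1 a4 -> ~~ adj a1 a5 -> ~~ adj a1 a6 ->
  ~~ adj a2 a4 -> ~~ adj a2 a5 -> ~~ adj a2 a6 ->
  ~~ adj a3 a5 -> ~~ adj a3 a6 -> ~~ adj a4 a6 -> has_induced_C adj 7.
Proof.
move=> *; apply: (@induced_of_seq [:: a0; a1; a2; a3; a4; a5; a6] a0
  (fun i j => (i.+1 %% 7 == j) || (j.+1 %% 7 == i))) => //.
by move=> [|[|[|[|[|[|[|i]]]]]]] [|[|[|[|[|[|[|j]]]]]]] //= _ _;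
  adj_from_hyps adj_sym adj_irr.
Qed.

(* Opposite vertices of C_4 have the same neighbours, so here the adjacency
   pattern does not force injectivity. *)
Lemma induced_C4 (a0 a1 a2 a3 : T) :
  adj a0 a1 -> adj a1 a2 -> adj a2 a3 -> adj a3 a0 ->
  ~~ adj a0 a2 -> ~~ adj a1 a3 -> a0 != a2 -> a1 != a3 -> has_induced_C adj 4.
Proof.
move=> a01 a12 a23 a30 a02 a13 a0a2 a1a3.
exists (fun i : 'I_4 => nth a0 [:: a0; a1; a2; a3] i); split; last first.
  by move=> [[|[|[|[|i]]]] ?] [[|[|[|[|j]]]] ?] //=; adj_from_hyps adj_sym adj_irr.
move=> [[|[|[|[|i]]]] ?] [[|[|[|[|j]]]] ?] //= eq_ij; apply: val_inj => //=.
all: by move: a01 a12 a23 a30 a0a2 a1a3; rewrite eq_ij ?adj_irr ?eqxx.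
Qed.

End InducedSubgraphs.

Lemma connect_exit_edge (T : finType) (e : rel T) (X : {pred T}) x y :
  connect e x y -> x \in X -> y \notin X -> exists a b, [/\ a \in X, b \notin X & e a b].
Proof.
move=> /connectP[p + ->{y}]; elim: p x => [|c p IHp] x /=; first by move=> _ ->.
case/andP=> xc cp xX; have [cX|cNX] := boolP (c \in X); first exact: IHp.
by exists x, c.
Qed.

Lemma connected_far_induced_path (T : finType) (adj : rel T) (K : {set T}) u k0 k :
  connected_in adj K -> k0 \in K -> adj u k0 -> k \in K -> ~~ adj u k ->
  (forall a, a \in K -> adj u a -> ~~ adj a k) ->
  exists a b c, [/\ [/\ a \in K, b \in K & c \in K], [/\ adj u a, adj a b & adj b c]
                  & [/\ ~~ adj u b, ~~ adj u c & ~~ adj a c]].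
Proof.
move=> [_ connK] k0K uk0 kK uk k_far.
pose X := [set c in K | adj u c || [exists a in K, adj u a && adj a c]].
have k0X : k0 \in X by rewrite inE k0K uk0.
have kNX : k \notin X.
  rewrite inE kK (negbTE uk) /=; apply/exists_inP => -[a aK /andP[ua ak]].
  by move: (k_far a aK ua); rewrite ak.
have [b [c [bX cNX /and3P[bc bK cK]]]] := connect_exit_edge (connK _ _ k0K kK) k0X kNX.
have [uc c_far] : ~~ adj u c /\ forall a, a \in K -> adj u a -> ~~ adj a c.
  move: cNX; rewrite inE cK negb_or => /andP[-> /exists_inP c_far]; split=> // a aK ua.
  by apply/negP => ac; apply: c_far; exists a; rewrite ?ua.
have ub : ~~ adj u b by apply/negP => ub; move: (c_far b bK ub); rewrite bc.
move: bX; rewrite inE bK (negbTE ub) => /exists_inP[a aK /andP[ua ab]].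
by exists a, b, c; split; split=> //; apply: c_far.
Qed.

Section ForbiddenAttachments.
Variables (T : finType) (adj : rel T).
Hypotheses (adj_sym : symmetric adj) (adj_irr : irreflexive adj).
Hypotheses (noP7 : ~ has_induced_P adj 7) (noC4 : ~ has_induced_C adj 4)
  (noC6 : ~ has_induced_C adj 6) (noC7 : ~ has_induced_C adj 7).

Lemma P7_with_end_chords_contra w z y x p q r :
  adj w z -> adj z y -> adj y x -> adj x p -> adj p q -> adj q r ->
  ~~ adj w y -> ~~ adj w x -> ~~ adj w p ->
  ~~ adj z x -> ~~ adj z p -> ~~ adj z q -> ~~ adj z r ->
  ~~ adj y p -> ~~ adj y q -> ~~ adj y r ->
  ~~ adj x q -> ~~ adj x r -> ~~ adj p r -> False.
Proof.
move=> *; have [wq|wNq] := boolP (adj w q).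
  by apply: noC6; apply: (@induced_C6 _ _ adj_sym adj_irr w z y x p q);
    adj_from_hyps adj_sym adj_irr.
have [wr|wNr] := boolP (adj w r).
  by apply: noC7; apply: (@induced_C7 _ _ adj_sym adj_irr w z y x p q r);
    adj_from_hyps adj_sym adj_irr.
by apply: noP7; apply: (@induced_P7 _ _ adj_sym adj_irr w z y x p q r);
  adj_from_hyps adj_sym adj_irr.
Qed.

Variables (x y z w u v : T) (K : {set T}).
Hypotheses (xy : adj x y) (yz : adj y z) (zw : adj z w) (ux : adj u x)
  (xNz : ~~ adj x z) (wNx : ~~ adj w x) (wNy : ~~ adj w y)
  (uNy : ~~ adj u y) (uNz : ~~ adj u z) (vNy : ~~ adj v y) (vNz : ~~ adj v z)
  (u_neq_v : u != v) (uNv : ~~ adj u v)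
  (KNxyz : {in K, forall k, [&& ~~ adj k x, ~~ adj k y & ~~ adj k z]}).

Lemma two_step_attachment_contra a b :
  a \in K -> b \in K -> adj u a -> adj a b -> adj b v -> ~~ adj u b -> ~~ adj v a ->
  False.
Proof.
move=> /KNxyz/and3P[aNx aNy aNz] /KNxyz/and3P[bNx bNy bNz] ua ab bv uNb vNa.
have [vx|vNx] := boolP (adj v x); last first.
  by apply: noP7; apply: (@induced_P7 _ _ adj_sym adj_irr z y x u a b v);
    adj_from_hyps adj_sym adj_irr.
have [wu|wNu] := boolP (adj w u); last first.
  by apply: (@P7_with_end_chords_contra w z y x u a b);
    adj_from_hyps adj_sym adj_irr.
have [wv|wNv] := boolP (adj w v); last first.
  by apply: (@P7_with_end_chords_contra w z y x v b a);
    adj_from_hyps adj_sym adj_irr.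
have w_neq_x : w != x by apply: contraNneq xNz => <-; rewrite adj_sym.
by apply: noC4; apply: (@induced_C4 _ _ adj_sym adj_irr w u x v);
  adj_from_hyps adj_sym adj_irr.
Qed.

Lemma tail_common_nbr :
  connected_in adj K -> has_nbr_in adj u K -> has_nbr_in adj v K ->
  exists2 k, k \in K & adj u k && adj v k.
Proof.
move=> connK /exists_inP[k0 k0K uk0] /exists_inP[kv kvK vkv].
have [k /andP[kK uvk] | no_common] := pickP [pred k in K | adj u k && adj v k].
  by exists k.
have vNa a : a \in K -> adj u a -> ~~ adj v a.
  by move=> aK ua; move: (no_common a); rewrite /= aK ua => /negbT.
have uNkv : ~~ adj u kv by apply: contraL vkv => /(vNa _ kvK).
have [a /andP[aK /andP[ua akv]] | kv_far] := pickP [pred a in K | adj u a && adj a kv].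
  by case: (two_step_attachment_contra aK kvK ua akv _ uNkv (vNa a aK ua)); rewrite adj_sym.
have [a [b [c [[aK bK cK] [ua ab bc] [uNb uNc aNc]]]]] :
    exists a b c, [/\ [/\ a \in K, b \in K & c \in K], [/\ adj u a, adj a b & adj b c]
                  & [/\ ~~ adj u b, ~~ adj u c & ~~ adj a c]].
  apply: (connected_far_induced_path connK k0K uk0 kvK uNkv) => a aK ua.
  by move: (kv_far a); rewrite /= aK ua => /negbT.
move: aK bK cK => /KNxyz/and3P[? ? ?] /KNxyz/and3P[? ? ?] /KNxyz/and3P[? ? ?].
by case: noP7; apply: (@induced_P7 _ _ adj_sym adj_irr z y x u a b c);
  adj_from_hyps adj_sym adj_irr.
Qed.

End ForbiddenAttachments.

Section NiceBlowup.
Variables (T : finType) (adj : rel T) (B : 'I_5 -> {set T}).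
Hypotheses (adj_sym : symmetric adj) (HB : nice_blowup_C5 adj B).

Lemma ordS5 (j : 'I_5) : ordS (ordS (ordS (ordS (ordS j)))) = j.
Proof. by apply: val_inj; case: j => [[|[|[|[|[|]]]]] ?]. Qed.

Lemma notin_supp_nonadj t j y : j \notin supp adj B t -> y \in B j -> ~~ adj t y.
Proof. by rewrite inE => /exists_inP tNB yB; apply/negP => ty; apply: tNB; exists y. Qed.

Lemma A2_anticomplete_far i :
  anticomplete adj (A2 adj B i)
    (B (ordS (ordS i)) :|: B (ordS (ordS (ordS i))) :|: B (ordS (ordS (ordS (ordS i))))).
Proof.
move=> t y; rewrite inE => /andP[_ /eqP st].
rewrite !inE => /orP[/orP[]|] yB; apply: notin_supp_nonadj yB; rewrite st;
  by case: i {st} => [[|[|[|[|[|//]]]]] ?]; rewrite !inE.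
Qed.

Lemma A3'_nbr_succ j t : t \in A3' adj B j -> has_nbr_in adj t (B (ordS j)).
Proof.
have [_ _ Bnbr _ _] := HB; rewrite !inE => /orP[/andP[_ /eqP st] | /Bnbr[] //].
have : ordS j \in supp adj B t by rewrite st !inE eqxx !orbT.
by rewrite inE.
Qed.

Lemma A3'_anticomplete_far j :
  anticomplete adj (A3' adj B j) (B (ordS (ordS j)) :|: B (ordS (ordS (ordS j)))).
Proof.
have [_ _ _ Banti _] := HB.
move=> t y; rewrite !inE => /orP[/andP[_ /eqP st] | tB] yB.
  case/orP: yB => yB; apply: notin_supp_nonadj yB; rewrite st;
    by case: j {st} => [[|[|[|[|[|//]]]]] ?]; rewrite !inE.
case/orP: yB => yB; first exact: Banti tB yB.
by rewrite adj_sym; apply: Banti yB _; rewrite ordS5.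
Qed.

Lemma A3'_tail j u : u \in A3' adj B j ->
  exists x y z w,
    [/\ [/\ x \in B (ordS j), y \in B (ordS (ordS j)) & z \in B (ordS (ordS (ordS j)))],
        [/\ adj u x, adj x y, adj y z & adj z w] & [/\ ~~ adj x z, ~~ adj w x & ~~ adj w y]].
Proof.
have [_ _ Bnbr Banti _] := HB.
move=> /A3'_nbr_succ/exists_inP[x Bx ux].
have [_ /exists_inP[y By xy]] := Bnbr _ _ Bx.
have [_ /exists_inP[z Bz yz]] := Bnbr _ _ By.
have [_ /exists_inP[w Bw zw]] := Bnbr _ _ Bz.
exists x, y, z, w; split; split=> //; first exact: Banti Bx Bz.
  by apply: Banti Bw _; rewrite ordS5.
by rewrite adj_sym; apply: Banti By Bw.
Qed.

End NiceBlowup.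

Theorem lemma7p2 (T : finType) (adj : rel T)
  (adj_sym : symmetric adj) (adj_irr : irreflexive adj)
  (noP7 : ~ has_induced_P adj 7) (noC4 : ~ has_induced_C adj 4)
  (noC6 : ~ has_induced_C adj 6) (noC7 : ~ has_induced_C adj 7)
  (B : 'I_5 -> {set T}) (HB : nice_blowup_C5 adj B)
  (i : 'I_5) (K : {set T})
  (HK : K \subset A2 adj B i) (Kconn : connected_in adj K)
  (u v : T)
  (Hu : u \in nbhd adj K :&: A3' adj B (ordS i))
  (Hv : v \in nbhd adj K :&: A3' adj B (ordS i))
  (Huv : u != v) (Hnadj : ~~ adj u v) :
  exists2 w, w \in K & adj u w && adj v w.
Proof.
have [uNK uA] := setIP Hu; have [vNK vA] := setIP Hv.
have [x [y [z [w [[Bx By Bz] [ux xy yz zw] [xNz wNx wNy]]]]]] := A3'_tail adj_sym HB uA.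
have A3'Nyz t : t \in A3' adj B (ordS i) -> ~~ adj t y /\ ~~ adj t z.
  by move=> tA; split; apply: (A3'_anticomplete_far adj_sym HB tA);
    rewrite !inE ?By ?Bz ?orbT.
have [uNy uNz] := A3'Nyz u uA; have [vNy vNz] := A3'Nyz v vA.
have KNxyz : {in K, forall k, [&& ~~ adj k x, ~~ adj k y & ~~ adj k z]}.
  move=> k /(subsetP HK) kA; apply/and3P; split;
    by apply: (A2_anticomplete_far kA); rewrite !inE ?Bx ?By ?Bz ?orbT.
move: uNK vNK; rewrite !inE => /andP[_ uK] /andP[_ vK].
exact: (tail_common_nbr adj_sym adj_irr noP7 noC4 noC6 noC7 xy yz zw ux xNz wNx wNy
          uNy uNz vNy vNz Huv Hnadj KNxyz Kconn uK vK).
Qed.
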